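(* Let $\mu>0$, $\sigma\ge0$, and let $A$ be the randomized single-item mechanism that posts price $\frac{1}{2}\mu$ with probability $\frac12$ and price $\mu+\frac{\sigma^2}{\mu}$ with probability $\frac12$. Then for every distribution $F$ supported on exactly two points, with mean $\mu$ and variance exactly $\sigma^2$, we have $\mathrm{REV}(A;F)\ge\frac14\,\mathrm{OPT}(F)$.
   Context: Single item, single buyer with nonnegative value $X\sim F$; the buyer buys iff $X$ is at least the posted price. $\mathrm{REV}(p;F)=p\Pr[X\ge p]$, for a distribution $A$ over prices $\mathrm{REV}(A;F)=\mathbb{E}_{p\sim A}[\mathrm{REV}(p;F)]$, and $\mathrm{OPT}(F)=\sup_{p\ge0}\mathrm{REV}(p;F)$. *)

From mathcomp Require Import all_boot all_order all_algebra.
From mathcomp Require Import all_classical all_reals.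
Set Implicit Arguments. Unset Strict Implicit. Unset Printing Implicit Defensive.
Import Order.TTheory GRing.Theory Num.Theory.
Local Open Scope ring_scope.
Local Open Scope classical_set_scope.

Section Defs.
Variable R : realType.

(* A distribution F supported on exactly two points: value a with probability
   wa and value b with probability wb, where a <> b, wa, wb > 0, wa + wb = 1. *)
Record twopoint := TwoPoint { tp_a : R; tp_b : R; tp_wa : R; tp_wb : R }.

Definition valid_twopoint (F : twopoint) : Prop :=
  0 <= tp_a F /\ 0 <= tp_b F /\ tp_a F != tp_b F /\
  0 < tp_wa F /\ 0 < tp_wb F /\ tp_wa F + tp_wb F = 1.

Definition tailprob (F : twopoint) (p : R) : R :=
  (if p <= tp_a F then tp_wa F else 0) + (if p <= tp_b F then tp_wb F else 0).

Definition mean (F : twopoint) : R := tp_wa F * tp_a F + tp_wb F * tp_b F.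

Definition variance (F : twopoint) : R :=
  tp_wa F * (tp_a F - mean F) ^+ 2 + tp_wb F * (tp_b F - mean F) ^+ 2.

Definition REV (p : R) (F : twopoint) : R := p * tailprob F p.

(* a randomized mechanism: finite list of (price, probability) pairs;
   REV(A;F) = E_{p ~ A}[REV(p;F)] *)
Definition REVmix (A : seq (R * R)) (F : twopoint) : R :=
  \sum_(pw <- A) pw.2 * REV pw.1 F.

Definition OPT (F : twopoint) : R := sup [set REV p F | p in [set p : R | 0 <= p]].

End Defs.

From mathcomp Require Import all_boot all_order all_algebra.
From mathcomp Require Import all_classical all_reals.
From mathcomp Require Import ring lra.
Set Implicit Arguments. Unset Strict Implicit.
Import Order.TTheory GRing.Theory Num.Theory.
Local Open Scope ring_scope.

(* Let the support be a < b with weights wa, wb, and let q := E[X^2] / E[X] =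
   mu + sigma^2 / mu.  A single price earns at most max(a, b wb).  Since
   sigma^2 >= 0 and 0 <= X <= b, we have mu <= q <= b, so the price q sells
   exactly to the high type and earns q wb.  If mu/2 <= a, the price mu/2
   always sells, and a, b wb <= mu bound OPT by twice its revenue.  Otherwise
   a < mu/2 forces a < wb b and b <= 2 q, so OPT <= 2 q wb, twice the revenue
   of the price q. *)

Section TwoPointRevenue.
Variable R : realType.
Implicit Types (F : twopoint R) (p c : R).

Definition second_moment F : R := tp_wa F * tp_a F ^+ 2 + tp_wb F * tp_b F ^+ 2.

Definition moment_price F : R := mean F + variance F / mean F.

Definition tp_swap F : twopoint R := TwoPoint (tp_b F) (tp_a F) (tp_wb F) (tp_wa F).

Lemma valid_twopoint_swap F : valid_twopoint F -> valid_twopoint (tp_swap F).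
Proof.
case: F => a b wa wb [? [? [? [? [? ?]]]]] /=.
by do !split => //; rewrite 1?eq_sym // addrC.
Qed.

Lemma mean_swap F : mean (tp_swap F) = mean F.
Proof. by rewrite /mean addrC. Qed.

Lemma variance_swap F : variance (tp_swap F) = variance F.
Proof. by rewrite /variance mean_swap addrC. Qed.

Lemma moment_price_swap F : moment_price (tp_swap F) = moment_price F.
Proof. by rewrite /moment_price mean_swap variance_swap. Qed.

Lemma REV_swap p F : REV p (tp_swap F) = REV p F.
Proof. by rewrite /REV /tailprob addrC. Qed.

Lemma REVmix_halves p1 p2 F :
  REVmix [:: (p1, 1 / 2); (p2, 1 / 2)] F = (REV p1 F + REV p2 F) / 2.
Proof. by rewrite /REVmix !big_cons big_nil /=; ring. Qed.

Lemma OPT_le F c : (forall p, 0 <= p -> REV p F <= c) -> OPT F <= c.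
Proof.
move=> REV_le; apply: ge_sup; first by exists (REV 0 F); exists 0 => //=.
by move=> _ [p hp <-]; exact: REV_le.
Qed.

Lemma variance_ge0 F : 0 <= tp_wa F -> 0 <= tp_wb F -> 0 <= variance F.
Proof. by move=> hwa hwb; rewrite addr_ge0 // mulr_ge0 // sqr_ge0. Qed.

Lemma moment_priceE F : tp_wa F + tp_wb F = 1 -> mean F != 0 ->
  moment_price F = second_moment F / mean F.
Proof.
case: F => a b wa wb /= hw hmu; apply: (mulIf hmu).
rewrite mulrDl !divfK // /variance /second_moment /mean /=.
have -> : wb = 1 - wa by lra.
ring.
Qed.

Section Support.
Variables a b wa wb : R.
Local Notation F := (TwoPoint a b wa wb).

Lemma REV_below p : a <= b -> wa + wb = 1 -> p <= a -> REV p F = p.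
Proof.
by move=> hab hw hpa; rewrite /REV /tailprob /= hpa (le_trans hpa hab) hw mulr1.
Qed.

Lemma REV_between p : a < p <= b -> REV p F = p * wb.
Proof. by case/andP=> hap hpb; rewrite /REV /tailprob /= leNgt hap hpb add0r. Qed.

Lemma REV_above p : a <= b -> b < p -> REV p F = 0.
Proof.
move=> hab hbp; have hap : a < p := le_lt_trans hab hbp.
by rewrite /REV /tailprob /= !leNgt hap hbp addr0 mulr0.
Qed.

Lemma REV_le_max p : 0 <= a <= b -> 0 <= wb -> wa + wb = 1 ->
  REV p F <= Num.max a (b * wb).
Proof.
case/andP=> ha hab hwb hw; rewrite le_max.
have [hpa|hap] := lerP p a; first by rewrite REV_below ?hpa.
have [hpb|hbp] := lerP p b; last by rewrite REV_above ?ha.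
by rewrite REV_between ?hap ?hpb // ler_wpM2r ?orbT.
Qed.

Lemma mean_mem : a < b -> 0 < wa -> 0 < wb -> wa + wb = 1 -> a < mean F < b.
Proof.
move=> hab hwa hwb hw; rewrite /mean /=; have -> : wa = 1 - wb by lra.
by apply/andP; split; nra.
Qed.

Lemma second_moment_le : 0 <= a <= b -> 0 <= wa -> 0 <= wb ->
  second_moment F <= b * mean F.
Proof.
case/andP=> ha hab hwa hwb; rewrite /second_moment /mean /=.
have : 0 <= wa * a * (b - a) by rewrite !mulr_ge0 // subr_ge0.
nra.
Qed.

Lemma le_twice_second_moment : 0 <= a -> 0 < wa -> 0 < wb -> wa + wb = 1 ->
  2 * a < mean F -> b * mean F <= 2 * second_moment F.
Proof.
rewrite /second_moment /mean /= => ha hwa hwb hw hlow.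
have ha_split : a = wa * a + wb * a by rewrite -mulrDl hw mul1r.
have ha_wbb : a < wb * b by have := mulr_ge0 (ltW hwb) ha; lra.
have hb : 0 < b by rewrite -(pmulr_rgt0 _ hwb); apply: le_lt_trans ha_wbb.
have : a * b <= wb * b * b by rewrite ler_pM2r // (ltW ha_wbb).
have : 0 <= wb * a * b by rewrite !mulr_ge0 ?(ltW hwb) ?(ltW hb).
have : 0 <= wa * a ^+ 2 by rewrite mulr_ge0 ?sqr_ge0 ?(ltW hwa).
nra.
Qed.

Lemma moment_price_mem : 0 <= a -> a < b -> 0 < wa -> 0 < wb -> wa + wb = 1 ->
  mean F <= moment_price F <= b.
Proof.
move=> ha hab hwa hwb hw; have /andP[ha_mu _] := mean_mem hab hwa hwb hw.
have hmu : 0 < mean F by apply: le_lt_trans ha_mu.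
have hvar := @variance_ge0 F (ltW hwa) (ltW hwb).
apply/andP; split; first by rewrite lerDl divr_ge0 // ltW.
rewrite moment_priceE ?gt_eqF // ler_pdivrMr //.
by apply: second_moment_le; rewrite ?ha ltW.
Qed.

Lemma REV_le_mechanism p : 0 <= a -> a < b -> 0 < wa -> 0 < wb -> wa + wb = 1 ->
  REV p F <= 2 * (REV (mean F / 2) F + REV (moment_price F) F).
Proof.
move=> ha hab hwa hwb hw.
have ha_b : 0 <= a <= b by rewrite ha (ltW hab).
apply: (le_trans (REV_le_max p ha_b (ltW hwb) hw)); rewrite ge_max.
have /andP[ha_mu hmu_b] := mean_mem hab hwa hwb hw.
have hmu : 0 < mean F by apply: le_lt_trans ha_mu.
have /andP[hmu_q hq_b] := moment_price_mem ha hab hwa hwb hw.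
set q := moment_price F in hmu_q hq_b *.
rewrite [REV q F]REV_between; last by rewrite hq_b andbT (lt_le_trans ha_mu).
have hqwb : 0 <= q * wb by nra.
have [hlow|hhigh] := lerP (mean F / 2) a.
  have hwbb : wb * b <= mean F by rewrite /mean /=; nra.
  by rewrite REV_below ?(ltW hab) //; apply/andP; split; nra.
rewrite REV_between; last by rewrite hhigh; lra.
have hb_2q : b <= 2 * q.
  rewrite /q moment_priceE ?gt_eqF // mulrA ler_pdivlMr //.
  by rewrite le_twice_second_moment //; lra.
have ha_wbb : a < wb * b by move: hhigh; rewrite /mean /=; nra.
by apply/andP; split; nra.
Qed.

End Support.

Lemma REV_le_mechanism_valid F p : valid_twopoint F ->
  REV p F <= 2 * (REV (mean F / 2) F + REV (moment_price F) F).
Proof.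
wlog hab : F / tp_a F < tp_b F.
  move=> ordered hF; case: (ltrgtP (tp_a F) (tp_b F)) => hab.
  - exact: ordered.
  - rewrite -!(REV_swap _ F) -mean_swap -moment_price_swap.
    by apply: ordered => //; apply: valid_twopoint_swap.
  - by case: hF => _ [_ [+ _]]; rewrite hab eqxx.
case: F hab => a b wa wb /= hab [ha [_ [_ [hwa [hwb hw]]]]].
exact: REV_le_mechanism.
Qed.

End TwoPointRevenue.

Theorem proposition2 (R : realType) (mu sigma : R) (hmu : 0 < mu) (hsigma : 0 <= sigma)
  (F : twopoint R) :
  valid_twopoint F -> mean F = mu -> variance F = sigma ^+ 2 ->
  REVmix [:: (mu / 2, 1 / 2); (mu + sigma ^+ 2 / mu, 1 / 2)] F >= OPT F / 4.
Proof.
move=> hF <- <-; rewrite REVmix_halves -/(moment_price F).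
suff : OPT F <= 2 * (REV (mean F / 2) F + REV (moment_price F) F) by lra.
by apply: OPT_le => p _; exact: REV_le_mechanism_valid.
Qed.
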